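(* Let $G$ be a finite abelian group and let $B\subset G$ be an irreducible balanced set. Then there exists $g\in -B$ such that $\Sigma(B+g)=\langle B+g\rangle$. That is, $B+g$ is an additive basis for the subgroup generated by $B+g$.
   Context: A set $B\subset G$ is balanced if for every $b\in B$ there exist distinct $b_1,b_2\in B$ with $2b=b_1+b_2$. A balanced set $B$ is irreducible if it does not contain two disjoint balanced subsets. For a finite set $S$, $\Sigma(S)=\{\sum_{s\in S'}s:S'\subseteq S\}$, and $\langle S\rangle$ denotes the subgroup of $G$ generated by $S$. *)

From mathcomp Require Import all_boot all_order all_algebra.
Set Implicit Arguments. Unset Strict Implicit. Unset Printing Implicit Defensive.
Import GRing.Theory.
Local Open Scope ring_scope.

Section Defs.
Variable G : finZmodType.

Definition balanced (B : {set G}) : Prop :=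
  B != set0 /\
  forall b, b \in B -> exists b1 b2, [/\ b1 \in B, b2 \in B, b1 != b2 &
                                      b *+ 2 = b1 + b2].

Definition irreducible_balanced (B : {set G}) : Prop :=
  balanced B /\
  ~ (exists B1 B2 : {set G}, [/\ B1 \subset B, B2 \subset B,
                                 [disjoint B1 & B2], balanced B1 & balanced B2]).

Definition subset_sums (S : {set G}) : {set G} :=
  [set \sum_(x in T) x | T : {set G} in powerset S].

Definition is_subgroup (H : {set G}) : bool :=
  (0 \in H) && [forall x in H, forall y in H, x - y \in H].

Definition gen_subgroup (S : {set G}) : {set G} :=
  \bigcap_(H : {set G} | is_subgroup H && (S \subset H)) H.

Definition translate (S : {set G}) (g : G) : {set G} := [set s + g | s in S].
Definition neg_set (S : {set G}) : {set G} := [set - s | s in S].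
End Defs.

From mathcomp Require Import all_boot all_order all_algebra.
From mathcomp Require Import zify.
Set Implicit Arguments. Unset Strict Implicit. Unset Printing Implicit Defensive.
Import GRing.Theory.

(* Say that [c] is a step from [a] when [2a = c + c'] for some [c' <> c] in [B].
   The points of [B] reachable from [a] form a balanced set, so by
   irreducibility any two such sets meet; for [b0] with the smallest one,
   every [a] in [B] reaches [b0].  Hence in [S = B - b0] every nonzero [s]
   satisfies [2s = s1 + s2] with [s1, s2] in [S] and [s1] closer to [0] than
   [s].  In a sum of elements of [S], a repeated nonzero summand [b + b] can
   thus be replaced by [s1 + s2], and a weighted count shows this terminates:
   every such sum is a subset sum.  So [Sigma(S)] is closed under addition,
   and a finite additively closed set containing [0] is the subgroup <S>. *)

Lemma not_uniq_filter_perm_dup (T : eqType) (P : pred T) (s : seq T) :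
  ~~ uniq [seq x <- s | P x] ->
  exists2 x, P x & exists s', perm_eq s [:: x, x & s'].
Proof.
elim: s => [//|a s IH] /=.
suff keep_a : ~~ uniq [seq x <- s | P x] ->
    exists2 x, P x & exists s', perm_eq (a :: s) [:: x, x & s'].
  case: ifP => [Pa|_]; last exact: keep_a.
  rewrite /= negb_and negbK mem_filter Pa /= => /orP[as_|]; last exact: keep_a.
  by exists a => //; exists (rem a s); rewrite perm_cons perm_to_rem.
move=> /IH[x Px [s' perm_s]]; exists x => //; exists (a :: s').
by rewrite perm_sym (perm_catCA [:: x; x] [:: a]) /= perm_cons perm_sym.
Qed.

Section Depth.
Variables (T : finType) (e : rel T) (y : T).

Lemma connect_depth : exists d : T -> nat,
  forall x, connect e x y -> x != y -> exists2 c, e x c & d c < d x.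
Proof.
pose reaches_in x n :=
  ~~ connect e x y || [exists p : n.-tuple T, path e x p && (last x p == y)].
have reachable x : exists n, reaches_in x n.
  case: (boolP (connect e x y)) => [/connectP[p e_p y_last]|nxy]; last first.
    by exists 0; rewrite /reaches_in nxy.
  exists (size p); apply/orP; right; apply/existsP; exists (in_tuple p).
  by rewrite e_p y_last eqxx.
exists (fun x => ex_minn (reachable x)) => x xy neq_xy.
case: ex_minnP => n; rewrite /reaches_in xy /= => /existsP[[p /= /eqP size_p]].
case: p size_p => [_ /= /eqP eq_xy|c p <-]; first by rewrite eq_xy eqxx in neq_xy.
case/andP=> /andP[e_xc e_p] last_p min_x; exists c => //.
case: ex_minnP => m _ min_c; rewrite ltnS; apply: min_c.
by apply/orP; right; apply/existsP; exists (in_tuple p); apply/andP; split.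
Qed.

End Depth.

Section SubsetSums.
Variable G : finZmodType.
Local Open Scope ring_scope.
Implicit Types (S H P : {set G}) (x y : G).

Lemma subset_sumsP S x :
  reflect (exists2 T : {set G}, T \subset S & x = \sum_(t in T) t)
          (x \in subset_sums S).
Proof.
apply: (iffP imsetP) => [[T] | [T TS ->]]; last by exists T; rewrite ?powersetE.
by rewrite powersetE => TS ->; exists T.
Qed.

Lemma subset_sums0 S : 0 \in subset_sums S.
Proof. by apply/subset_sumsP; exists set0; rewrite ?sub0set ?big_set0. Qed.

Lemma subset_sums_sub S : S \subset subset_sums S.
Proof.
by apply/subsetP => s sS; apply/subset_sumsP; exists [set s]; rewrite ?sub1set ?big_set1.
Qed.

Lemma subgroup0 H : is_subgroup H -> 0 \in H.
Proof. by case/andP. Qed.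

Lemma subgroupB H x y : is_subgroup H -> x \in H -> y \in H -> x - y \in H.
Proof. by case/andP=> _ /forall_inP/(_ x) xH /xH/forall_inP; apply. Qed.

Lemma subgroupD H x y : is_subgroup H -> x \in H -> y \in H -> x + y \in H.
Proof.
move=> subH xH yH; have := subgroupB subH xH (subgroupB subH (subgroup0 subH) yH).
by rewrite sub0r opprK.
Qed.

Lemma subset_sums_min S H : is_subgroup H -> S \subset H -> subset_sums S \subset H.
Proof.
move=> subH /subsetP SH; apply/subsetP => _ /subset_sumsP[T /subsetP TS ->].
apply: (big_ind (fun u => u \in H)); first exact: subgroup0.
  by move=> u v; apply: subgroupD.
by move=> t /TS /SH.
Qed.

(* Finiteness is used here: translation by [y] maps [P] injectively into
   itself, hence onto it. *)
Lemma addr_closed_subgroup P :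
  0 \in P -> {in P &, forall x y, x + y \in P} -> is_subgroup P.
Proof.
move=> P0 addP; apply/andP; split=> //.
apply/forall_inP => x xP; apply/forall_inP => y yP.
have /eqP transl_P : [set p + y | p in P] == P.
  rewrite eqEcard (card_imset _ (addIr y)) leqnn andbT.
  by apply/subsetP => _ /imsetP[p pP ->]; apply: addP.
by move: xP; rewrite -{1}transl_P => /imsetP[p pP ->]; rewrite addrK.
Qed.

Lemma gen_subgroup_least S P :
  is_subgroup P -> S \subset P ->
  (forall H, is_subgroup H -> S \subset H -> P \subset H) ->
  gen_subgroup S = P.
Proof.
move=> subP SP minP; apply/eqP; rewrite eqEsubset; apply/andP; split.
  by apply: bigcap_inf; rewrite subP.
by apply/bigcapsP => H /andP[subH SH]; apply: minP.
Qed.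

Lemma subset_sums_gen_subgroup S :
  {in subset_sums S &, forall x y, x + y \in subset_sums S} ->
  subset_sums S = gen_subgroup S.
Proof.
move=> addS; symmetry; apply: gen_subgroup_least.
- exact: addr_closed_subgroup (subset_sums0 S) addS.
- exact: subset_sums_sub.
- exact: subset_sums_min.
Qed.

End SubsetSums.

Section MidpointDescent.
Variable G : finZmodType.
Local Open Scope ring_scope.

Definition midpoint_descent (S : {set G}) (z : G) (d : G -> nat) : Prop :=
  forall s, s \in S -> s != z -> exists s1 s2,
    [/\ s1 \in S, s2 \in S, s *+ 2 = s1 + s2 & (d s1 < d s)%N].

Lemma midpoint_descent_translate S z d g :
  midpoint_descent S z d ->
  midpoint_descent (translate S g) (z + g) (fun x => d (x - g)).
Proof.
move=> descS _ /imsetP[s sS ->]; rewrite (inj_eq (addIr g)) addrK => neq_sz.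
have [s1 [s2 [s1S s2S mid_s lt_d]]] := descS s sS neq_sz.
exists (s1 + g), (s2 + g); split; rewrite ?addrK //; try exact: imset_f.
by rewrite mulrnDl mid_s addrACA.
Qed.

Variables (S : {set G}) (d : G -> nat).
Hypothesis descS : midpoint_descent S 0 d.

(* Replacing a summand pair [b + b] by [s1 + s2] lowers the total weight. *)
Let N := (\max_(s in S) d s)%N.
Let weight x := (3 ^ N - 3 ^ (N - d x))%N.

Lemma weight_midpoint b s1 s2 :
  b \in S -> s2 \in S -> (d s1 < d b)%N -> (weight s1 + weight s2 < 2 * weight b)%N.
Proof.
move=> bS s2S lt_d.
have le_b : (d b <= N)%N by exact: (@leq_bigmax_cond _ (fun s => s \in S) d).
have le_s2 : (d s2 <= N)%N by exact: (@leq_bigmax_cond _ (fun s => s \in S) d).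
have w_s1 : (3 * 3 ^ (N - d b) <= 3 ^ (N - d s1))%N.
  by rewrite -expnS leq_pexp2l //; lia.
have w1_le : (3 ^ (N - d s1) <= 3 ^ N)%N by rewrite leq_pexp2l //; lia.
have w2_pos : (0 < 3 ^ (N - d s2))%N by rewrite expn_gt0.
have w2_le : (3 ^ (N - d s2) <= 3 ^ N)%N by rewrite leq_pexp2l //; lia.
rewrite /weight; lia.
Qed.

Lemma seq_sum_subset_sums (s : seq G) :
  {subset s <= S} -> \sum_(x <- s) x \in subset_sums S.
Proof.
move=> sS; have [n lt_n] := ubnP (\sum_(x <- s) weight x)%N.
elim: n s lt_n sS => // n IH s.
case: (boolP (uniq [seq x <- s | x != 0])) => [uniq_s _ sS|].
  apply/subset_sumsP; exists [set x in s | x != 0].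
    by apply/subsetP => x; rewrite inE => /andP[/sS].
  rewrite (bigID (fun x => x == 0)) /= big1 ?add0r => [|x /eqP//].
  rewrite -big_filter big_uniq //; apply: eq_bigl => x.
  by rewrite !inE mem_filter andbC.
move=> /not_uniq_filter_perm_dup[b b_neq0 [s' perm_s]] lt_n sS.
have bS : b \in S by apply: sS; rewrite (perm_mem perm_s) mem_head.
have [s1 [s2 [s1S s2S mid_b lt_d]]] := descS bS b_neq0.
have -> : \sum_(x <- s) x = \sum_(x <- [:: s1, s2 & s']) x.
  by rewrite (perm_big _ perm_s) !big_cons /= !addrA -mulr2n mid_b.
apply: IH.
  have := weight_midpoint bS s2S lt_d.
  by rewrite (perm_big _ perm_s) !big_cons /= in lt_n *; lia.
move=> x; rewrite !inE => /or3P[/eqP->|/eqP->|x_s'] //.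
by apply: sS; rewrite (perm_mem perm_s) !inE x_s' !orbT.
Qed.

Lemma subset_sums_addr_closed :
  {in subset_sums S &, forall x y, x + y \in subset_sums S}.
Proof.
move=> _ _ /subset_sumsP[T TS ->] /subset_sumsP[T' T'S ->].
rewrite -!big_enum -big_cat; apply: seq_sum_subset_sums => x.
by rewrite mem_cat !mem_enum => /orP[]; apply: subsetP.
Qed.

Lemma midpoint_descent_subset_sums : subset_sums S = gen_subgroup S.
Proof. exact: subset_sums_gen_subgroup subset_sums_addr_closed. Qed.

End MidpointDescent.

Section IrreducibleBalanced.
Variables (G : finZmodType) (B : {set G}).
Local Open Scope ring_scope.

Definition midpoint_step : rel G := fun a c =>
  (c \in B) && [exists c' in B, (c != c') && (a *+ 2 == c + c')].

Definition step_closure (a : G) : {set G} := [set c in B | connect midpoint_step a c].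

Lemma step_closure_balanced a : balanced B -> a \in B -> balanced (step_closure a).
Proof.
case=> _ balB aB; split; first by apply/set0Pn; exists a; rewrite inE aB connect0.
move=> c; rewrite inE => /andP[cB ac].
have [c1 [c2 [c1B c2B neq_c12 mid_c]]] := balB c cB.
have step_to u v : u \in B -> v \in B -> u != v -> c *+ 2 = u + v -> u \in step_closure a.
  move=> uB vB neq_uv mid_uv; rewrite inE uB (connect_trans ac) // connect1 //.
  by rewrite /midpoint_step uB; apply/existsP; exists v; rewrite vB neq_uv mid_uv eqxx.
exists c1, c2; split => //; first exact: step_to c1B c2B neq_c12 mid_c.
by apply: (step_to c2 c1); rewrite // 1?eq_sym // addrC.
Qed.

Lemma step_closures_meet a a' :
  irreducible_balanced B -> a \in B -> a' \in B ->
  ~~ [disjoint step_closure a & step_closure a'].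
Proof.
case=> balB irrB aB a'B; apply/negP => dis; apply: irrB.
have sub_B u : step_closure u \subset B by apply/subsetP => c; rewrite inE => /andP[].
exists (step_closure a), (step_closure a'); split; rewrite ?sub_B //.
  exact: step_closure_balanced.
exact: step_closure_balanced.
Qed.

(* If [c] is reachable from both [a] and [b0], the closure of [c] is contained
   in that of [b0]; minimality forces equality, so [c], hence [a], reaches [b0]. *)
Lemma irreducible_balanced_sink :
  irreducible_balanced B ->
  exists2 b0, b0 \in B & forall a, a \in B -> connect midpoint_step a b0.
Proof.
move=> irrB; have [[/set0Pn[b bB] _] _] := irrB.
have [b0 b0B min_b0] := arg_minnP (fun u => #|step_closure u|) bB.
exists b0 => // a aB.
have /pred0Pn[c /andP[]] := step_closures_meet irrB aB b0B.
rewrite !inE => /andP[cB ac] /andP[_ b0c].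
have sub_c : step_closure c \subset step_closure b0.
  apply/subsetP => u; rewrite !inE => /andP[-> cu].
  exact: connect_trans b0c cu.
have eq_c : step_closure c = step_closure b0.
  by apply/eqP; rewrite eqEcard sub_c min_b0.
have : b0 \in step_closure c by rewrite eq_c /step_closure inE connect0 andbT.
by rewrite inE => /andP[_]; apply: connect_trans ac.
Qed.

Lemma irreducible_balanced_descent :
  irreducible_balanced B ->
  exists2 b0, b0 \in B & exists d, midpoint_descent B b0 d.
Proof.
move=> /irreducible_balanced_sink[b0 b0B sink]; exists b0 => //.
have [d depth] := connect_depth midpoint_step b0; exists d => a aB neq_ab0.
have [c /andP[cB /exists_inP[c' c'B /andP[_ /eqP mid_a]]] lt_d] :=
  depth a (sink a aB) neq_ab0.
by exists c, c'.
Qed.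

End IrreducibleBalanced.

Theorem proposition4p6 (G : finZmodType) (B : {set G}) :
  irreducible_balanced B ->
  exists2 g : G, g \in neg_set B &
    subset_sums (translate B g) = gen_subgroup (translate B g).
Proof.
move=> /irreducible_balanced_descent[b0 b0B [d descB]].
exists (- b0)%R; first exact: imset_f.
have := midpoint_descent_translate (g := (- b0)%R) descB.
by rewrite subrr; apply: midpoint_descent_subset_sums.
Qed.
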